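(* Let $n,m$ be positive integers and $s$ a real number with $0\le s\le n/2$. Define $$g(\alpha)=\sum_{i=1}^n\Big(i\alpha_i+m\big(\alpha_i+1-\tfrac{2s}{n}\big)^+\Big)$$ on the polytope $\mathcal{P}=\{\alpha\in\mathbb{R}^n:\ \tfrac{2s}{n}\ge\alpha_1\ge\alpha_2\ge\cdots\ge\alpha_n,\ \sum_{i=1}^n\alpha_i=0\}$. If $m\ge\lceil 2s\rceil-1$, then $$\min_{\alpha\in\mathcal{P}}g(\alpha)=d_1(s):=(-n-2m+2\lfloor 2s\rfloor+1)s+mn-\tfrac{\lfloor 2s\rfloor}{2}(\lfloor 2s\rfloor+1).$$
   Context: $(x)^+=\max(0,x)$. The function $d_1$ takes the value $(m-s)(n-2s)$ when $2s\in\mathbb{Z}$ and is linear in between. *)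

From Stdlib Require Import Reals Lra Lia ZArith.
Open Scope R_scope.

Fixpoint sum1 (n : nat) (f : nat -> R) : R :=
  match n with
  | O => 0
  | S k => sum1 k f + f (S k)
  end.

Definition floorR (x : R) : Z := Int_part x.   (* Int_part x = up x - 1 = floor x *)
Definition ceilR (x : R) : Z := (- Int_part (- x))%Z.

Definition pos_part (x : R) : R := Rmax 0 x.

(* alpha : nat -> R, only alpha 1 .. alpha n are relevant *)
Definition gfun (n m : nat) (s : R) (alpha : nat -> R) : R :=
  sum1 n (fun i => INR i * alpha i + INR m * pos_part (alpha i + 1 - 2 * s / INR n)).

Definition inP (n : nat) (s : R) (alpha : nat -> R) : Prop :=
  (n >= 1)%nat /\ alpha 1%nat <= 2 * s / INR n /\
  (forall i : nat, (1 <= i)%nat -> (i < n)%nat -> alpha (S i) <= alpha i) /\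
  sum1 n alpha = 0.

Definition d1val (n m : nat) (s : R) : R :=
  let F := IZR (floorR (2 * s)) in
  (- INR n - 2 * INR m + 2 * F + 1) * s + INR m * INR n - F / 2 * (F + 1).

From Stdlib Require Import Reals Lra Lia ZArith.
Open Scope R_scope.

(* Put t = 2s/n, c = ⌈2s⌉, p = n - c and f = c - 2s ∈ [0,1).  The minimum is attained at
   β = t - 1 + (1,…,1,f,0,…,0) with p ones: the first p coordinates sit at the upper bound
   t and the remaining mass is placed at the kink t - 1 of the positive part.  Each summand
   x ↦ i x + m (x + 1 - t)^+ is convex, and K = p + 1 + m is a subgradient of every summand
   at β_i relative to the constraint α_i ≤ t; for i > p + 1 this needs i ≤ n ≤ K, which is
   where m ≥ c - 1 enters.  As Σ α_i = Σ β_i, summing the supporting lines gives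
   g(α) ≥ g(β), and a direct evaluation gives g(β) = d_1(s). *)

Lemma sum1_le (N : nat) (F G : nat -> R) :
  (forall i, (1 <= i <= N)%nat -> F i <= G i) -> sum1 N F <= sum1 N G.
Proof.
  induction N as [|N IH]; intros H; cbn [sum1]; [lra|].
  assert (H1 : sum1 N F <= sum1 N G) by (apply IH; intros; apply H; lia).
  assert (H2 : F (S N) <= G (S N)) by (apply H; lia).
  lra.
Qed.

Lemma sum1_ext (N : nat) (F G : nat -> R) :
  (forall i, (1 <= i <= N)%nat -> F i = G i) -> sum1 N F = sum1 N G.
Proof.
  induction N as [|N IH]; intros H; cbn [sum1]; [reflexivity|].
  rewrite IH by (intros; apply H; lia).
  rewrite (H (S N)) by lia; reflexivity.
Qed.

Lemma sum1_add (N : nat) (F G : nat -> R) :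
  sum1 N (fun i => F i + G i) = sum1 N F + sum1 N G.
Proof. induction N as [|N IH]; cbn [sum1]; [lra | rewrite IH; ring]. Qed.

Lemma sum1_sub (N : nat) (F G : nat -> R) :
  sum1 N (fun i => F i - G i) = sum1 N F - sum1 N G.
Proof. induction N as [|N IH]; cbn [sum1]; [lra | rewrite IH; ring]. Qed.

Lemma sum1_scal (N : nat) (c : R) (F : nat -> R) :
  sum1 N (fun i => c * F i) = c * sum1 N F.
Proof. induction N as [|N IH]; cbn [sum1]; [lra | rewrite IH; ring]. Qed.

Lemma sum1_const (N : nat) (c : R) : sum1 N (fun _ => c) = INR N * c.
Proof. induction N as [|N IH]; cbn [sum1]; [simpl; lra | rewrite IH, S_INR; ring]. Qed.

Lemma sum1_INR (N : nat) : sum1 N INR = INR N * (INR N + 1) / 2.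
Proof. induction N as [|N IH]; cbn [sum1]; [simpl; lra | rewrite IH, S_INR; field]. Qed.

Lemma sum1_le_common_subgradient (N : nat) (F : nat -> R -> R) (K : R) (x y : nat -> R) :
  (forall i, (1 <= i <= N)%nat -> F i (y i) + K * (x i - y i) <= F i (x i)) ->
  sum1 N x = sum1 N y ->
  sum1 N (fun i => F i (y i)) <= sum1 N (fun i => F i (x i)).
Proof.
  intros Hsub Hxy.
  apply sum1_le in Hsub.
  rewrite sum1_add, sum1_scal, sum1_sub, Hxy in Hsub.
  lra.
Qed.

Lemma floorR_IZR_sub (c : Z) (f : R) :
  0 <= f < 1 -> floorR (IZR c - f) = if Req_dec_T f 0 then c else (c - 1)%Z.
Proof.
  intros hf; unfold floorR; destruct (Req_dec_T f 0) as [->|hf0].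
  - symmetry; apply (Int_part_frac_part_spec _ _ 0); lra.
  - symmetry; apply (Int_part_frac_part_spec _ _ (1 - f)); [lra|].
    rewrite minus_IZR; ring.
Qed.

Lemma ceilR_spec (x : R) : IZR (ceilR x) - 1 < x <= IZR (ceilR x).
Proof.
  unfold ceilR; rewrite opp_IZR.
  destruct (base_Int_part (- x)); lra.
Qed.

Lemma ceilR_nat (x : R) : 0 <= x -> exists k : nat, IZR (ceilR x) = INR k.
Proof.
  intros hx; pose proof (ceilR_spec x).
  assert (Hc : (-1 < ceilR x)%Z) by (apply lt_IZR; lra).
  exists (Z.to_nat (ceilR x)); rewrite INR_IZR_INZ, Z2Nat.id by lia; reflexivity.
Qed.

Lemma d1val_eq (n m p : nat) (s f : R) :
  0 <= f < 1 -> INR p + f = INR n - 2 * s ->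
  d1val n m s = (2 * s - INR n) * (INR n + 1) / 2 + INR p * (INR p + 1) / 2
                + (INR p + 1) * f + INR m * (INR p + f).
Proof.
  intros hf hsum.
  assert (hF : floorR (2 * s) = if Req_dec_T f 0 then (Z.of_nat n - Z.of_nat p)%Z
                                else (Z.of_nat n - Z.of_nat p - 1)%Z).
  { replace (2 * s) with (IZR (Z.of_nat n - Z.of_nat p) - f)
      by (rewrite minus_IZR, <- !INR_IZR_INZ; lra).
    exact (floorR_IZR_sub _ _ hf). }
  unfold d1val; rewrite hF.
  replace s with ((INR n - INR p - f) / 2) by lra.
  destruct (Req_dec_T f 0) as [->|_]; rewrite !minus_IZR, <- !INR_IZR_INZ; field.
Qed.

Lemma pos_part_id (x : R) : 0 <= x -> pos_part x = x.
Proof. intros; unfold pos_part; apply Rmax_right; lra. Qed.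

(* With [a = i] and [t = 2s/n] this is the [i]-th summand of [gfun]. *)
Definition gterm (a m t x : R) : R := a * x + m * pos_part (x + 1 - t).

Ltac unfold_gterm := unfold gterm, pos_part, Rmax; repeat destruct Rle_dec.

Lemma gterm_subgrad_kink (a m t K x : R) :
  a <= K <= a + m -> gterm a m t (t - 1) + K * (x - (t - 1)) <= gterm a m t x.
Proof. intros; unfold_gterm; nra. Qed.

Lemma gterm_subgrad_right (a m t x0 x : R) :
  0 <= m -> t - 1 <= x0 -> gterm a m t x0 + (a + m) * (x - x0) <= gterm a m t x.
Proof. intros; unfold_gterm; nra. Qed.

Lemma gterm_subgrad_left (a m t K x0 x : R) :
  0 <= m -> a + m <= K -> x <= x0 -> gterm a m t x0 + K * (x - x0) <= gterm a m t x.
Proof. intros; unfold_gterm; nra. Qed.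

Definition step (p : nat) (f : R) (i : nat) : R :=
  if Nat.leb i p then 1 else if Nat.eqb i (S p) then f else 0.

Lemma step_cases (p : nat) (f : R) (i : nat) :
  ((i <= p)%nat /\ step p f i = 1) \/ (i = S p /\ step p f i = f)
  \/ ((S p < i)%nat /\ step p f i = 0).
Proof.
  unfold step.
  destruct (Nat.leb_spec i p); [left; auto|].
  destruct (Nat.eqb_spec i (S p)); right; [left | right]; split; auto; lia.
Qed.

Lemma step_bounds (p : nat) (f : R) (i : nat) : 0 <= f <= 1 -> 0 <= step p f i <= 1.
Proof. intros; destruct (step_cases p f i) as [[_ ->]|[[_ ->]|[_ ->]]]; lra. Qed.

Lemma step_S_le (p : nat) (f : R) (i : nat) :
  0 <= f <= 1 -> step p f (S i) <= step p f i.
Proof.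
  intros; destruct (step_cases p f i) as [[? ->]|[[? ->]|[? ->]]];
    destruct (step_cases p f (S i)) as [[? ->]|[[? ->]|[? ->]]]; lra || lia.
Qed.

Lemma sum1_step_le (p : nat) (f : R) (N : nat) :
  (N <= p)%nat ->
  sum1 N (step p f) = INR N /\
  sum1 N (fun i => INR i * step p f i) = INR N * (INR N + 1) / 2.
Proof.
  induction N as [|N IH]; intros; cbn [sum1]; [simpl; lra|].
  destruct IH as [-> ->]; [lia|].
  destruct (step_cases p f (S N)) as [[_ ->]|[[? _]|[? _]]]; [|lia|lia].
  rewrite S_INR; split; field.
Qed.

Lemma sum1_step_gt (p : nat) (f : R) (N : nat) :
  (p < N)%nat ->
  sum1 N (step p f) = INR p + f /\
  sum1 N (fun i => INR i * step p f i) = INR p * (INR p + 1) / 2 + (INR p + 1) * f.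
Proof.
  induction N as [|N IH]; intros; [lia|cbn [sum1]].
  destruct (Nat.eq_dec N p) as [->|].
  - destruct (sum1_step_le p f p) as [-> ->]; [lia|].
    destruct (step_cases p f (S p)) as [[? _]|[[_ ->]|[? _]]]; [lia| |lia].
    rewrite S_INR; split; field.
  - destruct IH as [-> ->]; [lia|].
    destruct (step_cases p f (S N)) as [[? _]|[[? _]|[_ ->]]]; [lia|lia|].
    split; ring.
Qed.

Definition minimizer (n : nat) (s : R) (p : nat) (f : R) (i : nat) : R :=
  2 * s / INR n - 1 + step p f i.

Lemma inP_le_bound (n : nat) (s : R) (alpha : nat -> R) :
  inP n s alpha -> forall i, (1 <= i <= n)%nat -> alpha i <= 2 * s / INR n.
Proof.
  intros [_ [H1 [Hdec _]]] i Hi.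
  induction i as [|i IH]; [lia|].
  destruct (Nat.eq_dec i 0) as [->|]; [exact H1|].
  specialize (Hdec i ltac:(lia) ltac:(lia)); specialize (IH ltac:(lia)); lra.
Qed.

Section Minimizer.

Variables (n m p : nat) (s f : R).
Hypothesis hn : (0 < n)%nat.
Hypothesis hf : 0 <= f < 1.
Hypothesis hpn : (p < n)%nat \/ (p = n /\ f = 0).
Hypothesis hsum : INR p + f = INR n - 2 * s.

Lemma sum1_step_n :
  sum1 n (step p f) = INR p + f /\
  sum1 n (fun i => INR i * step p f i) = INR p * (INR p + 1) / 2 + (INR p + 1) * f.
Proof.
  destruct hpn as [Hlt | [-> ->]]; [now apply sum1_step_gt|].
  destruct (sum1_step_le n 0 n) as [-> ->]; [lia|]; split; ring.
Qed.

Lemma sum1_minimizer : sum1 n (minimizer n s p f) = 0.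
Proof.
  assert (0 < INR n) by (apply lt_0_INR; exact hn).
  unfold minimizer; rewrite sum1_add, sum1_const, (proj1 sum1_step_n).
  replace (INR n * (2 * s / INR n - 1)) with (2 * s - INR n) by (field; lra).
  lra.
Qed.

Lemma minimizer_inP : inP n s (minimizer n s p f).
Proof.
  unfold inP, minimizer; split; [lia|]; split; [|split].
  - pose proof (step_bounds p f 1); lra.
  - intros i _ _; pose proof (step_S_le p f i); lra.
  - exact sum1_minimizer.
Qed.

Lemma gfun_minimizer : gfun n m s (minimizer n s p f) = d1val n m s.
Proof.
  assert (0 < INR n) by (apply lt_0_INR; exact hn).
  rewrite (d1val_eq n m p s f hf hsum).
  unfold gfun, minimizer.
  rewrite (sum1_ext n _ (fun i => (2 * s / INR n - 1) * INR i
                                  + (INR i * step p f i + INR m * step p f i))).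
  2:{ intros i _; pose proof (step_bounds p f i).
      rewrite pos_part_id by lra; ring. }
  rewrite !sum1_add, !sum1_scal, sum1_INR, (proj1 sum1_step_n), (proj2 sum1_step_n).
  field; lra.
Qed.

Hypothesis hpm : (n <= p + 1 + m)%nat.

Lemma gfun_minimizer_le (alpha : nat -> R) :
  inP n s alpha -> gfun n m s (minimizer n s p f) <= gfun n m s alpha.
Proof.
  intros Halpha.
  set (t := 2 * s / INR n).
  set (K := INR p + 1 + INR m).
  apply (sum1_le_common_subgradient n (fun i => gterm (INR i) (INR m) t) K).
  - intros i Hi; unfold minimizer; fold t.
    assert (Hm : 0 <= INR m) by apply pos_INR.
    assert (HiK : INR i <= K)
      by (unfold K; rewrite <- S_INR, <- plus_INR; apply le_INR; lia).
    destruct (step_cases p f i) as [[Hip ->]|[[-> ->]|[Hip ->]]].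
    + apply le_INR in Hip.
      replace (t - 1 + 1) with t by ring.
      apply gterm_subgrad_left; [lra|unfold K; lra|apply (inP_le_bound n s alpha Halpha); lia].
    + unfold K; rewrite <- S_INR.
      apply gterm_subgrad_right; lra.
    + apply lt_INR in Hip; rewrite S_INR in Hip.
      replace (t - 1 + 0) with (t - 1) by ring.
      apply gterm_subgrad_kink; split; [exact HiK | unfold K; lra].
  - rewrite (proj2 (proj2 (proj2 Halpha))), sum1_minimizer; reflexivity.
Qed.

End Minimizer.

Theorem mainTheorem5 (n m : nat) (s : R)
  (hn : (0 < n)%nat) (hm : (0 < m)%nat)
  (hs0 : 0 <= s) (hs1 : s <= INR n / 2)
  (hms : INR m >= IZR (ceilR (2 * s)) - 1) :
  (forall alpha : nat -> R, inP n s alpha -> d1val n m s <= gfun n m s alpha) /\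
  (exists alpha : nat -> R, inP n s alpha /\ gfun n m s alpha = d1val n m s).
Proof.
  destruct (ceilR_nat (2 * s) ltac:(lra)) as [k Hk].
  pose proof (ceilR_spec (2 * s)) as Hc; rewrite Hk in Hc, hms.
  assert (Hkn : (k <= n)%nat) by (apply Nat.lt_succ_r, INR_lt; rewrite S_INR; lra).
  assert (Hkm : (k <= m + 1)%nat)
    by (apply INR_le; rewrite plus_INR; change (INR 1) with 1; lra).
  set (p := (n - k)%nat); set (f := INR k - 2 * s).
  assert (hf : 0 <= f < 1) by (unfold f; lra).
  assert (hsum : INR p + f = INR n - 2 * s) by (unfold p, f; rewrite minus_INR by exact Hkn; ring).
  assert (hpn : (p < n)%nat \/ (p = n /\ f = 0)).
  { destruct k as [|k]; [right | left; unfold p; lia].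
    unfold p, f; simpl in *; split; [lia | lra]. }
  assert (hpm : (n <= p + 1 + m)%nat) by (unfold p; lia).
  split.
  - intros alpha Halpha.
    rewrite <- (gfun_minimizer n m p s f hn hf hpn hsum).
    exact (gfun_minimizer_le n m p s f hn hf hpn hsum hpm alpha Halpha).
  - exists (minimizer n s p f); split.
    + exact (minimizer_inP n p s f hn hf hpn hsum).
    + exact (gfun_minimizer n m p s f hn hf hpn hsum).
Qed.
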